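(* Assume the setting of the context and suppose Assumption (A4) holds. Let $c_1$ be the constant of the lower bound $d_{G^n}(x,y)\ge c_1\alpha(n)d_E(x,y)$ in (A4)(a). Then for every $r,\varepsilon>0$ there exist a finite set $\mathcal{X}\subseteq\overline{B}_F(\rho,r/c_1)\cap F^*$ and an integer $n_0$ such that $(B_{G^n}(g_n(x),\alpha(n)\varepsilon))_{x\in\mathcal{X}}$ is a cover of $B_{G^n}(\rho,\alpha(n)r)$ whenever $n\geq n_0$.
   Context: Let $(E,d_E)$ be a metric space and $F\subseteq E$ such that $F\cap\overline{B}_E(x,r)$ is compact for all $x\in E$, $r>0$ ($\overline{B}_E$, $B_E$ closed and open balls in $E$). Let $d_F:=d_E|_{F\times F}$, $B_F(x,r)$, $\overline{B}_F(x,r)$ open and closed balls in $(F,d_F)$, and $\rho\in F$. For a locally finite connected graph $G$ with at least two vertices: $d_G$ is the shortest-path metric, $B_G(x,r)$ the open $d_G$-ball; $\mu^G$ a symmetric weight with $\mu^G_{xy}>0$ iff $\{x,y\}$ is an edge; $X^G$ the discrete time simple random walk with $P_G(x,y)=\mu^G_{xy}/\sum_z\mu^G_{xz}$; generator $\mathcal{L}_Gf(x)=\sum_yP_G(x,y)(f(y)-f(x))$. Parabolic Harnack inequality (PHI): with $Q_G(x,R,T):=[0,T]\times B_G(x,R)$, $Q^-_G:=[\frac14T,\frac12T]\times B_G(x,\frac12R)$, $Q^+_G:=[\frac34T,T)\times B_G(x,\frac12R)$, a function $u$ on $([0,T]\cap\mathbb{Z})\times B_G(x,R+1)$ is caloric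 on $Q_G(x,R,T)$ if $u(n+1,y)-u(n,y)=\mathcal{L}_Gu(n,y)$ for integers $0\le n\le T-1$, $y\in B_G(x,R)$; PHI with constant $C_H$ holds for $Q_G(x,R,T)$ if every non-negative caloric $u$ on it satisfies $\sup_{Q^-_G}\hat u\le C_H\inf_{Q^+_G}\hat u$, $\hat u(n,y):=u(n+1,y)+u(n,y)$. $(G^n)_{n\ge1}$ are such graphs with $V(G^n)\subseteq E$ and distinguished vertex $\rho$. $(\alpha(n)),(\gamma(n))$ are non-negative sequences diverging to $\infty$. For $x\in E$, $g_n(x)$ is a point of $V(G^n)$ minimising $d_E(x,\cdot)$. Assumption (A4): for some $\kappa\ge2$ and $C_H<\infty$: (a) there is $c_1>0$ with $d_{G^n}(x,y)\ge c_1\alpha(n)d_E(x,y)$ for all $x,y\in V(G^n)$, $n\ge1$, and a non-negative $\tilde\alpha(n)=o(\alpha(n))$ such that for each $r>0$ there are $c_2<\infty$, $n_0$ with $d_{G^n}(x,y)\le c_2\alpha(n)d_E(x,y)+\tilde\alpha(n)$ for all $x,y\in V(G^n)\cap B_E(\rho,r)$, $n\ge n_0$; (b) for every $r>0$, $V(G^n)\cap\overline{B}_E(\rho,r)\to\overline{B}_F(\rho,r)$ in the Hausdorff topology on non-empty compact subsets of $(E,d_E)$; (c) for every $x\in V(G^n)$, $n\ge1$, there is a positive integer $s_{G^n}(x)$ such that PHI with constant $C_H$ holds for $Q_{G^n}(x,R,R^\kappa)$ for all $R\ge s_{G^n}(x)$, and there is a dense subset $F^*\subseteq F$ with $\alpha(n)^{-1}s_{G^n}(g_n(x))\to0$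 for every $x\in F^*$; (d) $\alpha(n)^\kappa=O(\gamma(n))$. *)

From Stdlib Require Import Reals Lra Lia List ClassicalEpsilon.
Open Scope R_scope.
Set Implicit Arguments.

Section Defs.
Variable E : Type.

Definition is_metric (d : E -> E -> R) : Prop :=
  (forall x y, 0 <= d x y) /\
  (forall x y, d x y = 0 <-> x = y) /\
  (forall x y, d x y = d y x) /\
  (forall x y z, d x z <= d x y + d y z).

Definition is_open (d : E -> E -> R) (U : E -> Prop) : Prop :=
  forall x, U x -> exists e, 0 < e /\ forall y, d x y < e -> U y.

Definition compact_set (d : E -> E -> R) (A : E -> Prop) : Prop :=
  forall (I : Type) (U : I -> E -> Prop),
    (forall i, is_open d (U i)) ->
    (forall x, A x -> exists i, U i x) ->
    exists l : list I, forall x, A x -> exists i, In i l /\ U i x.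

(** Convergence A n -> B in the Hausdorff topology on non-empty compact
    subsets: all sets are non-empty compact, and the Hausdorff distance
    tends to 0. *)
Definition hausdorff_cv (d : E -> E -> R) (A : nat -> E -> Prop) (B : E -> Prop)
  : Prop :=
  (forall n, compact_set d (A n) /\ exists a, A n a) /\
  (compact_set d B /\ exists b, B b) /\
  (forall eps, 0 < eps -> exists N, forall n, (N <= n)%nat ->
     (forall a, A n a -> exists b, B b /\ d a b < eps) /\
     (forall b, B b -> exists a, A n a /\ d a b < eps)).

Record graph := mkGraph {
  gV : E -> Prop;
  gnb : E -> list E;
  gmu : E -> E -> R }.

Definition gadj (G : graph) (x y : E) : Prop := In y (gnb G x).

Inductive walk (G : graph) : E -> E -> nat -> Prop :=
| walk0 x : gV G x -> walk G x x 0
| walkS x z y k : gV G x -> gadj G x z -> walk G z y k -> walk G x y (S k).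

(** Locally finite (built-in: finite neighbour lists), simple, undirected,
    connected graph with at least two vertices, and a symmetric weight
    mu with mu_xy > 0 iff {x,y} is an edge. *)
Definition wf_graph (G : graph) : Prop :=
  (forall x, gV G x -> NoDup (gnb G x)) /\
  (forall x y, gV G x -> gadj G x y -> gV G y /\ y <> x /\ gadj G y x) /\
  (forall x y, gV G x -> gV G y -> exists k, walk G x y k) /\
  (exists x y, gV G x /\ gV G y /\ x <> y) /\
  (forall x y, gV G x -> gV G y ->
     gmu G x y = gmu G y x /\ 0 <= gmu G x y /\ (0 < gmu G x y <-> gadj G x y)).

Definition gdist (G : graph) (x y : E) : nat :=
  epsilon (inhabits 0%nat)
    (fun k => walk G x y k /\ forall j, walk G x y j -> (k <= j)%nat).

Definition gball (G : graph) (x : E) (r : R) (y : E) : Prop :=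
  gV G y /\ INR (gdist G x y) < r.

Fixpoint lsum (l : list E) (f : E -> R) : R :=
  match l with nil => 0 | a :: l' => f a + lsum l' f end.

Definition gP (G : graph) (x y : E) : R :=
  gmu G x y / lsum (gnb G x) (fun z => gmu G x z).

(** generator L_G f(x) = sum_y P_G(x,y)(f(y)-f(x)); P_G(x,y)=0 off edges *)
Definition gL (G : graph) (f : E -> R) (x : E) : R :=
  lsum (gnb G x) (fun y => gP G x y * (f y - f x)).

Definition caloric (G : graph) (u : nat -> E -> R) (x : E) (Rr T : R) : Prop :=
  forall n : nat, INR n <= T - 1 -> forall y, gball G x Rr y ->
    u (S n) y - u n y = gL G (u n) y.

Definition uhat (u : nat -> E -> R) (n : nat) (y : E) : R := u (S n) y + u n y.

(** PHI with constant CH for Q_G(x,R,T): sup_{Q^-} uhat <= CH inf_{Q^+} uhat,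
    written pointwise. *)
Definition PHI (G : graph) (CH : R) (x : E) (Rr T : R) : Prop :=
  forall u : nat -> E -> R,
    (forall n y, gball G x (Rr + 1) y -> 0 <= u n y) ->
    caloric G u x Rr T ->
    forall n1 y1 n2 y2,
      T / 4 <= INR n1 <= T / 2 -> gball G x (Rr / 2) y1 ->
      3 * T / 4 <= INR n2 < T -> gball G x (Rr / 2) y2 ->
      uhat u n1 y1 <= CH * uhat u n2 y2.

End Defs.

(* Pull a vertex y of B_G(rho, alpha r) back along a geodesic by about
   alpha eps / 2 steps to a vertex z.  The lower bound of (A4)(a) puts z in a
   closed E-ball of radius strictly less than r / c1, where, by Hausdorff
   convergence, it lies near F, hence near a point x of a finite net of F*
   points (which exists by compactness).  The nearest vertex g_n x is then
   E-close to z, so by the upper bound of (A4)(a) it is within graph distance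
   alpha eps / 4 of z, and within alpha eps of y. *)
From Stdlib Require Import Reals List Lra Lia ClassicalEpsilon Classical Arith ZArith.
Open Scope R_scope.
Set Implicit Arguments.
Unset Strict Implicit.

Lemma floor_nat a : 0 <= a -> exists m : nat, INR m <= a < INR m + 1.
Proof.
  intros Ha. destruct (base_Int_part a) as [Hle Hgt].
  assert (Hpos : (0 <= Int_part a)%Z).
  { assert (Hlt : IZR (-1) < IZR (Int_part a)) by lra. apply lt_IZR in Hlt. lia. }
  exists (Z.to_nat (Int_part a)). rewrite INR_IZR_INZ, Z2Nat.id by exact Hpos. lra.
Qed.

Section Metric.
Variables (E : Type) (d : E -> E -> R).
Hypothesis Hd : is_metric d.

Lemma metric_ge0 x y : 0 <= d x y.
Proof. apply Hd. Qed.

Lemma metric_sym x y : d x y = d y x.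
Proof. apply Hd. Qed.

Lemma metric_triangle x y z : d x z <= d x y + d y z.
Proof. apply Hd. Qed.

Lemma compact_finite_net (K P : E -> Prop) (e : R) :
  compact_set d K ->
  (forall b, K b -> exists x, P x /\ d x b < e) ->
  exists X : list E, (forall x, In x X -> P x) /\
    forall b, K b -> exists x, In x X /\ d x b < e.
Proof.
  intros HK Hdense.
  destruct (HK {x : E | P x} (fun i y => d (proj1_sig i) y < e)) as [l Hl].
  - intros i y Hy. exists (e - d (proj1_sig i) y). split; [lra|].
    intros w Hw. pose proof (metric_triangle (proj1_sig i) y w). lra.
  - intros b Kb. destruct (Hdense b Kb) as [x [Px Hx]].
    now exists (exist _ x Px).
  - exists (map (@proj1_sig _ _) l). split.
    + intros x Hx. apply in_map_iff in Hx. destruct Hx as [[x' Px] [<- _]]. exact Px.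
    + intros b Kb. destruct (Hl b Kb) as [i [Hi Hib]].
      exists (proj1_sig i). split; [apply in_map; exact Hi | exact Hib].
Qed.

End Metric.

Section GraphDistance.
Variables (E : Type) (G : graph E).

Lemma walk_gV_r x y k : walk G x y k -> gV G y.
Proof. intros H; induction H; auto. Qed.

Lemma walk_cat x z y a b : walk G x z a -> walk G z y b -> walk G x y (a + b).
Proof. intros H; induction H; intros; simpl; auto. econstructor; eauto. Qed.

Lemma walk_split x y k j : walk G x y k -> (j <= k)%nat ->
  exists z, walk G x z j /\ walk G z y (k - j).
Proof.
  intros H; revert j; induction H; intros j Hj.
  - replace j with 0%nat by lia. exists x; split; constructor; auto.
  - destruct j as [|j].
    + exists x; split; [constructor; auto | econstructor; eauto].
    + destruct (IHwalk j ltac:(lia)) as [w [Hxw Hwy]].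
      exists w; split; [econstructor; eauto | exact Hwy].
Qed.

Lemma gdist_spec x y k : walk G x y k ->
  walk G x y (gdist G x y) /\ forall j, walk G x y j -> (gdist G x y <= j)%nat.
Proof.
  intros Hk. unfold gdist. apply epsilon_spec. revert Hk. induction k as [k IH] using lt_wf_ind.
  intros Hk. destruct (classic (exists j, (j < k)%nat /\ walk G x y j))
    as [[j [Hjk Hj]] | Hmin].
  - exact (IH j Hjk Hj).
  - exists k; split; [exact Hk|]. intros j Hj.
    destruct (Nat.le_gt_cases k j); [assumption|]. exfalso; eauto.
Qed.

Lemma gdist_le x y k : walk G x y k -> (gdist G x y <= k)%nat.
Proof. intros Hk. exact (proj2 (gdist_spec Hk) k Hk). Qed.

Hypothesis Hconn : forall x y, gV G x -> gV G y -> exists k, walk G x y k.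

Lemma gdist_walk x y : gV G x -> gV G y -> walk G x y (gdist G x y).
Proof. intros Vx Vy. destruct (Hconn Vx Vy) as [k Hk]. exact (proj1 (gdist_spec Hk)). Qed.

Lemma gdist_triangle x z y : gV G x -> gV G z -> gV G y ->
  (gdist G x y <= gdist G x z + gdist G z y)%nat.
Proof.
  intros Vx Vz Vy. exact (gdist_le (walk_cat (gdist_walk Vx Vz) (gdist_walk Vz Vy))).
Qed.

Lemma gdist_retreat x y m : gV G x -> gV G y ->
  exists z, gV G z /\ (gdist G x z <= gdist G x y - m)%nat /\ (gdist G z y <= m)%nat.
Proof.
  intros Vx Vy. set (k := gdist G x y).
  destruct (walk_split (gdist_walk Vx Vy) (j := k - m) ltac:(lia)) as [z [Hxz Hzy]].
  exists z. split; [exact (walk_gV_r Hxz)|]. split.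
  - exact (gdist_le Hxz).
  - apply Nat.le_trans with (k - (k - m))%nat; [exact (gdist_le Hzy) | lia].
Qed.

End GraphDistance.

Section Cover.
Variables (E : Type) (dE : E -> E -> R) (F : E -> Prop) (rho : E)
  (G : nat -> graph E) (alpha : nat -> R) (g : nat -> E -> E)
  (c1 : R) (alphat : nat -> R) (Fstar : E -> Prop).
Hypothesis Hmetric : is_metric dE.
Hypothesis HFcpt : forall x r, 0 < r -> compact_set dE (fun y => F y /\ dE x y <= r).
Hypothesis HG : forall n, wf_graph (G n).
Hypothesis HrhoV : forall n, gV (G n) rho.
Hypothesis Halpha : (forall n, 0 <= alpha n) /\ cv_infty alpha.
Hypothesis Hg : forall n x, gV (G n) (g n x) /\
  forall v, gV (G n) v -> dE x (g n x) <= dE x v.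
Hypothesis Hc1 : 0 < c1.
Hypothesis Hlow : forall n x y, gV (G n) x -> gV (G n) y ->
  INR (gdist (G n) x y) >= c1 * alpha n * dE x y.
Hypothesis Halphat : (forall n, 0 <= alphat n) /\
  (forall e, 0 < e -> exists N, forall n, (N <= n)%nat -> alphat n <= e * alpha n).
Hypothesis Hup : forall r, 0 < r -> exists c2 : R, exists n0 : nat,
  forall n x y, (n0 <= n)%nat ->
    gV (G n) x -> dE rho x < r -> gV (G n) y -> dE rho y < r ->
    INR (gdist (G n) x y) <= c2 * alpha n * dE x y + alphat n.
Hypothesis HHaus : forall r, 0 < r ->
  hausdorff_cv dE (fun n y => gV (G n) y /\ dE rho y <= r) (fun y => F y /\ dE rho y <= r).
Hypothesis HFstar : (forall x, Fstar x -> F x) /\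
  (forall x e, F x -> 0 < e -> exists y, Fstar y /\ dE x y < e).

Lemma gconn n x y : gV (G n) x -> gV (G n) y -> exists k, walk (G n) x y k.
Proof. apply (HG n). Qed.

Lemma Fstar_net r e : 0 < r -> 0 < e ->
  exists X : list E, (forall x, In x X -> Fstar x /\ dE rho x < r + e) /\
    forall b, F b -> dE rho b <= r -> exists x, In x X /\ dE x b < e.
Proof.
  intros Hr He.
  destruct (compact_finite_net Hmetric (P := fun x => Fstar x /\ dE rho x < r + e) (e := e)
              (HFcpt (x := rho) Hr)) as [X [HX Hnet]].
  - intros b [Fb Hb]. destruct (proj2 HFstar b e Fb He) as [x [Fx Hbx]].
    pose proof (metric_triangle Hmetric rho b x).
    exists x. rewrite (metric_sym Hmetric x b). repeat split; auto; lra.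
  - exists X. split; [exact HX|]. intros b Fb Hb. exact (Hnet b (conj Fb Hb)).
Qed.

Lemma nearest_vertex_close r e : 0 < r -> 0 < e ->
  exists N, forall n, (N <= n)%nat ->
    forall x, F x -> dE rho x <= r -> dE x (g n x) < e.
Proof.
  intros Hr He. destruct (HHaus Hr) as [_ [_ Hcv]]. destruct (Hcv e He) as [N HN].
  exists N. intros n Hn x Fx Hx.
  destruct (proj2 (HN n Hn) x (conj Fx Hx)) as [v [[Vv _] Hvx]].
  pose proof (proj2 (Hg n x) v Vv). rewrite (metric_sym Hmetric v x) in Hvx. lra.
Qed.

Lemma net_tracks_vertices r e (X : list E) : 0 < r -> 0 < e ->
  (forall x, In x X -> F x /\ dE rho x <= r + e) ->
  (forall b, F b -> dE rho b <= r -> exists x, In x X /\ dE x b < e) ->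
  exists N, forall n, (N <= n)%nat -> forall z, gV (G n) z -> dE rho z <= r ->
    exists x, In x X /\ dE (g n x) z < 3 * e.
Proof.
  intros Hr He HX Hnet.
  destruct (HHaus Hr) as [_ [_ Hcv]]. destruct (Hcv e He) as [N1 HN1].
  destruct (nearest_vertex_close (r := r + e) ltac:(lra) He) as [N2 HN2].
  exists (N1 + N2)%nat. intros n Hn z Vz Hz.
  destruct (proj1 (HN1 n ltac:(lia)) z (conj Vz Hz)) as [b [[Fb Hb] Hzb]].
  destruct (Hnet b Fb Hb) as [x [Hx Hxb]]. destruct (HX x Hx) as [Fx Hrx].
  pose proof (HN2 n ltac:(lia) x Fx Hrx).
  pose proof (metric_triangle Hmetric (g n x) x b).
  pose proof (metric_triangle Hmetric (g n x) b z).
  rewrite (metric_sym Hmetric (g n x) x), (metric_sym Hmetric b z) in *.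
  exists x. split; [exact Hx | lra].
Qed.

Lemma Fstar_net_tracks_vertices r e : 0 < r -> 0 < e ->
  exists X : list E, (forall x, In x X -> Fstar x /\ dE rho x < r + e) /\
    exists N, forall n, (N <= n)%nat -> forall z, gV (G n) z -> dE rho z <= r ->
      exists x, In x X /\ dE (g n x) z < 3 * e.
Proof.
  intros Hr He. destruct (Fstar_net Hr He) as [X [HX Hnet]].
  exists X. split; [exact HX|]. apply net_tracks_vertices; [exact Hr | exact He | | exact Hnet].
  intros x Hx. destruct (HX x Hx) as [Fx Hrx]. split; [exact (proj1 HFstar x Fx) | lra].
Qed.

Lemma alpha_eventually_gt M e : 0 < e -> exists N, forall n, (N <= n)%nat -> M < alpha n * e.
Proof.
  intros He. destruct (proj2 Halpha (M / e)) as [N HN]. exists N. intros n Hn.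
  pose proof (HN n Hn) as Hlarge. apply Rmult_lt_compat_r with (r := e) in Hlarge; [|exact He].
  replace (M / e * e) with M in Hlarge by (field; lra). exact Hlarge.
Qed.

Lemma gdist_le_of_dE_small r e : 0 < r -> 0 < e ->
  exists delta N, 0 < delta /\ forall n, (N <= n)%nat -> forall u z,
    gV (G n) u -> dE rho u < r -> gV (G n) z -> dE rho z < r -> dE u z < delta ->
    INR (gdist (G n) u z) <= e * alpha n.
Proof.
  intros Hr He. destruct (Hup Hr) as [c2 [N1 HN1]].
  set (C := Rabs c2 + 1).
  assert (HC : 0 < C) by (pose proof (Rabs_pos c2); unfold C; lra).
  assert (Hc2 : c2 <= C) by (pose proof (Rle_abs c2); unfold C; lra).
  destruct (proj2 Halphat (e / 2) ltac:(lra)) as [N2 HN2].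
  exists (e / (2 * C)), (N1 + N2)%nat. split; [apply Rdiv_lt_0_compat; lra|].
  intros n Hn u z Vu Hu Vz Hz Huz.
  pose proof (HN1 n u z ltac:(lia) Vu Hu Vz Hz). pose proof (HN2 n ltac:(lia)).
  assert (Hscale : c2 * alpha n * dE u z <= e / 2 * alpha n).
  { pose proof (proj1 Halpha n). pose proof (metric_ge0 Hmetric u z).
    assert (C * dE u z <= e / 2).
    { apply Rle_trans with (C * (e / (2 * C))); [nra | right; field; lra]. }
    assert (0 <= alpha n * dE u z) by nra.
    apply Rle_trans with (C * (alpha n * dE u z)); nra. }
  lra.
Qed.

Lemma gball_retreat r e t n y : 4 < alpha n * e -> 0 <= t -> r - e / 4 <= c1 * t ->
  gball (G n) rho (alpha n * r) y ->
  exists z, gV (G n) z /\ dE rho z <= t /\ INR (gdist (G n) z y) <= alpha n * e / 2.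
Proof.
  intros Hal Ht Hrt [Vy Hy].
  assert (Hpos : 0 < alpha n).
  { destruct (proj1 Halpha n) as [Hlt | H0]; [exact Hlt|].
    rewrite <- H0, Rmult_0_l in Hal. lra. }
  destruct (floor_nat (a := alpha n * e / 2)) as [m [Hm1 Hm2]]; [lra|].
  destruct (gdist_retreat (@gconn n) m (HrhoV n) Vy) as [z [Vz [Hrz Hzy]]].
  exists z. split; [exact Vz|]. split.
  - pose proof (Hlow (HrhoV n) Vz) as Hlz. apply le_INR in Hrz.
    destruct (Nat.le_gt_cases m (gdist (G n) rho y)) as [Hmk | Hmk].
    + rewrite minus_INR in Hrz by exact Hmk.
      assert (Hlt : alpha n * (c1 * dE rho z) < alpha n * (c1 * t)) by nra.
      apply Rmult_lt_reg_l in Hlt; [|exact Hpos].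
      apply Rmult_lt_reg_l in Hlt; [lra | exact Hc1].
    + replace (gdist (G n) rho y - m)%nat with 0%nat in Hrz by lia. simpl in Hrz.
      assert (c1 * alpha n * dE rho z <= 0) by lra.
      assert (0 < c1 * alpha n) by nra. nra.
  - apply le_INR in Hzy. lra.
Qed.

End Cover.

Theorem lemma3p3
  (E : Type) (dE : E -> E -> R) (F : E -> Prop) (rho : E)
  (G : nat -> graph E) (alpha gamma : nat -> R) (g : nat -> E -> E)
  (kappa CH c1 : R) (alphat : nat -> R) (s : nat -> E -> nat)
  (Fstar : E -> Prop)
  (* setting *)
  (Hmetric : is_metric dE)
  (HFcpt : forall x r, 0 < r -> compact_set dE (fun y => F y /\ dE x y <= r))
  (HrhoF : F rho)
  (HG : forall n, wf_graph (G n))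
  (HrhoV : forall n, gV (G n) rho)
  (Halpha : (forall n, 0 <= alpha n) /\ cv_infty alpha)
  (Hgamma : (forall n, 0 <= gamma n) /\ cv_infty gamma)
  (Hg : forall n x, gV (G n) (g n x) /\
          forall v, gV (G n) v -> dE x (g n x) <= dE x v)
  (* (A4) *)
  (Hkappa : 2 <= kappa)
  (* (a) *)
  (Hc1 : 0 < c1)
  (Hlow : forall n x y, gV (G n) x -> gV (G n) y ->
            INR (gdist (G n) x y) >= c1 * alpha n * dE x y)
  (Halphat : (forall n, 0 <= alphat n) /\
             (forall e, 0 < e -> exists N, forall n, (N <= n)%nat ->
                 alphat n <= e * alpha n))
  (Hup : forall r, 0 < r -> exists c2 : R, exists n0 : nat,
            forall n x y, (n0 <= n)%nat ->
              gV (G n) x -> dE rho x < r -> gV (G n) y -> dE rho y < r ->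
              INR (gdist (G n) x y) <= c2 * alpha n * dE x y + alphat n)
  (* (b) *)
  (HHaus : forall r, 0 < r ->
             hausdorff_cv dE (fun n y => gV (G n) y /\ dE rho y <= r)
                             (fun y => F y /\ dE rho y <= r))
  (* (c) *)
  (Hs : forall n x, gV (G n) x ->
          (1 <= s n x)%nat /\
          forall Rr, INR (s n x) <= Rr -> PHI (G n) CH x Rr (Rpower Rr kappa))
  (HFstar : (forall x, Fstar x -> F x) /\
            (forall x e, F x -> 0 < e -> exists y, Fstar y /\ dE x y < e))
  (Hsconv : forall x, Fstar x ->
              Un_cv (fun n => INR (s n (g n x)) / alpha n) 0)
  (* (d) *)
  (HO : exists C : R, exists N : nat, forall n, (N <= n)%nat ->
          Rpower (alpha n) kappa <= C * gamma n) :
  forall r eps, 0 < r -> 0 < eps ->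
    exists (X : list E) (n0 : nat),
      (forall x, In x X -> F x /\ dE rho x <= r / c1 /\ Fstar x) /\
      (forall n, (n0 <= n)%nat -> forall y, gball (G n) rho (alpha n * r) y ->
         exists x, In x X /\ gball (G n) (g n x) (alpha n * eps) y).
Proof.
  intros r eps Hr Heps.
  set (th := Rmin eps (2 * r) / (4 * c1)).
  assert (Hcth : c1 * th = Rmin eps (2 * r) / 4) by (unfold th; field; lra).
  pose proof (Rmin_l eps (2 * r)). pose proof (Rmin_r eps (2 * r)).
  assert (Hth : 0 < th) by (apply Rdiv_lt_0_compat; [apply Rmin_pos|]; lra).
  assert (Hrc : 0 < r / c1) by (apply Rdiv_lt_0_compat; lra).
  set (r1 := r / c1 - th).
  assert (Hcr1 : c1 * r1 = r - c1 * th) by (unfold r1; field; lra).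
  assert (Hr1 : 0 < r1) by nra.
  destruct (gdist_le_of_dE_small (r := r / c1 + 3 * th) (e := eps / 4) Hmetric Halpha Halphat Hup)
    as [delta [N1 [Hdelta Hclose]]]; [lra | lra |].
  set (de := Rmin th (delta / 3)).
  assert (Hde : 0 < de /\ de <= th /\ 3 * de <= delta).
  { unfold de. pose proof (Rmin_r th (delta / 3)). repeat split; [apply Rmin_pos | apply Rmin_l |]; lra. }
  destruct (Fstar_net_tracks_vertices (r := r1) (e := de) Hmetric HFcpt Hg HHaus HFstar)
    as [X [HX [N2 HN2]]]; [exact Hr1 | lra |].
  destruct (alpha_eventually_gt Halpha 4 Heps) as [N3 HN3].
  exists X, (N1 + N2 + N3)%nat. split.
  { intros x Hx. destruct (HX x Hx) as [Fx Hrx].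
    repeat split; [exact (proj1 HFstar x Fx) | unfold r1 in Hrx; lra | exact Fx]. }
  intros n Hn y Hy. pose proof (HN3 n ltac:(lia)) as Hal.
  destruct (gball_retreat (r := r) (t := r1) HG HrhoV Halpha Hc1 Hlow Hal ltac:(lra) ltac:(lra) Hy)
    as [z [Vz [Hz Hzy]]].
  destruct (HN2 n ltac:(lia) z Vz Hz) as [x [Hx Hxz]].
  destruct (Hg n x) as [Vgx _].
  pose proof (metric_triangle Hmetric rho z (g n x)). rewrite (metric_sym Hmetric z (g n x)) in *.
  pose proof (Hclose n ltac:(lia) (g n x) z Vgx ltac:(unfold r1 in *; lra) Vz ltac:(unfold r1 in *; lra) ltac:(lra)).
  pose proof (le_INR _ _ (gdist_triangle (@gconn _ G HG n) Vgx Vz (proj1 Hy))). rewrite plus_INR in *.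
  exists x. split; [exact Hx|]. split; [exact (proj1 Hy) | lra].
Qed.
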